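(* Let $n,t\ge1$ and $q,b\ge2$. Let $\boldsymbol{x}\in\Sigma_q^n$ and $\mathcal{U}\subseteq\mathcal{I}_{t,b}(\boldsymbol{x})$. For every $\alpha\in\Sigma_q\setminus\{x_1\}$ we have $|\mathcal{U}^{\alpha\succ x_1,b}|\le\frac12 N_{q,b}^+(n,t)$. Consequently, if $|\mathcal{U}|\ge N_{q,b}^+(n,t)+1$, then $|\mathcal{U}^{\alpha\succ x_1,b}|<|\mathcal{U}^{x_1\succ\alpha,b}|$ for every $\alpha\in\Sigma_q\setminus\{x_1\}$.
   Context: $\Sigma_q=\{0,\ldots,q-1\}$. A $b$-burst-insertion at position $i\in[1,n+1]$ transforms $x_1\cdots x_n$ into $x_1\cdots x_{i-1}y_1\cdots y_b x_i\cdots x_n$ for arbitrary $y_1\cdots y_b\in\Sigma_q^b$. $\mathcal{I}_{t,b}(\boldsymbol{x})$ is the set of all length-$(n+tb)$ sequences obtainable from $\boldsymbol{x}$ by $t$ successive $b$-burst-insertions. $N_{q,b}^+(n,t)=\max\{|\mathcal{I}_{t,b}(\boldsymbol{x})\cap\mathcal{I}_{t,b}(\boldsymbol{y})|:\boldsymbol{x}\ne\boldsymbol{y}\in\Sigma_q^n\}$. For $\mathcal{U}\subseteq\Sigma_q^{n+tb}$ and distinct $\alpha,\beta\in\Sigma_q$, $\mathcal{U}^{\alpha\succ\beta,b}$ is the set of $\boldsymbol{y}\in\mathcal{U}$ for which there is $i\in[1,t+1]$ with $y_{(i-1)b+1}=\alpha$ and $y_{(j-1)b+1}\notin\{\alpha,\beta\}$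 for all $j\in[1,i-1]$ (i.e., among positions $1,b+1,\ldots,tb+1$, the symbol $\alpha$ appears before $\beta$). *)

From mathcomp Require Import all_boot.
Set Implicit Arguments. Unset Strict Implicit. Unset Printing Implicit Defensive.

(* s' is obtained from s by one b-burst-insertion: insert y (|y| = b) before
   position i+1 (0-indexed: after the first i symbols), i in [0, size s]. *)
Definition burst_ins (q b : nat) (s s' : seq 'I_q) : bool :=
  [exists i : 'I_(size s).+1, exists y : b.-tuple 'I_q,
     s' == take i s ++ (y : seq 'I_q) ++ drop i s].

Fixpoint burst_reach (q b t : nat) (s s' : seq 'I_q) : bool :=
  match t with
  | 0 => s' == s
  | t'.+1 => [exists z : (size s + b).-tuple 'I_q,
                burst_ins b s z && burst_reach b t' z s']
  end.

Definition Ins (q n t b : nat) (x : n.-tuple 'I_q) : {set (n + t * b).-tuple 'I_q} :=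
  [set z : (n + t * b).-tuple 'I_q | burst_reach b t x z].

Definition Nplus (q b n t : nat) : nat :=
  \max_(x : n.-tuple 'I_q) \max_(y : n.-tuple 'I_q | y != x)
     #|Ins t b x :&: Ins t b y|.

(* U^{alpha > beta, b}: among positions 1, b+1, ..., tb+1 (1-indexed),
   i.e. 0-indexed positions i*b for i = 0..t, alpha appears before beta. *)
Definition prec_set (q n t b : nat) (U : {set (n + t * b).-tuple 'I_q})
    (alpha beta : 'I_q) : {set (n + t * b).-tuple 'I_q} :=
  [set y in U | [exists i : 'I_t.+1,
      (nth q (map val y) (i * b) == val alpha) &&
      [forall j : 'I_t.+1, (j < i) ==>
          (nth q (map val y) (j * b) != val alpha) &&
          (nth q (map val y) (j * b) != val beta)]]].

(** A word of I_{t,b}(x1 :: T) still carries the head symbol x1 at some block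
    boundary k * b, with the suffix behind it in I_{t-k,b}(T); since the symbols
    in front of an earlier block boundary can be read as further bursts, the
    first block boundary carrying x1 also works, and so does every earlier one.
    Hence if alpha occupies a block boundary before the first x1, the word also
    lies in I_{t,b}(alpha :: T). Swapping alpha and x1 on the block boundaries up
    to the first x1 maps U^{alpha > x1} injectively into
    I_{t,b}(x) :&: I_{t,b}(alpha :: T) and outside U^{alpha > x1}, so
    2 |U^{alpha > x1}| <= N^+. As every word of U has x1 at a block boundary,
    U is covered by U^{alpha > x1} and U^{x1 > alpha}, which gives the second
    claim. *)

From mathcomp Require Import all_boot zify.
Set Implicit Arguments. Unset Strict Implicit. Unset Printing Implicit Defensive.

Section FirstOccurrence.
Variables (T : eqType) (x0 : T).
Implicit Types (s : seq T) (x y : T).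

Lemma nth_before_index s x j : j < index x s -> nth x0 s j != x.
Proof. by move=> /(before_find x0); rewrite /= eq_sym => ->. Qed.

Lemma index_first_nth s x i : i < size s -> nth x0 s i = x ->
  (forall j, j < i -> nth x0 s j != x) -> index x s = i.
Proof.
move=> lt_i_s nth_i before_i; apply/eqP; rewrite eqn_leq.
rewrite -{1}nth_i index_nth //= leqNgt; apply/negP => lt_x_i.
have x_in : x \in s by rewrite -index_mem (ltn_trans lt_x_i).
by have := before_i _ lt_x_i; rewrite nth_index ?eqxx.
Qed.

Lemma index_lt_exists n s x y : size s = n -> x != y ->
  [exists i : 'I_n, (nth x0 s i == x) &&
     [forall j : 'I_n, (j < i) ==> (nth x0 s j != x) && (nth x0 s j != y)]]
  = (index x s < index y s).
Proof.
move=> size_s neq_xy; apply/existsP/idP => [[i /andP[/eqP nth_i /forallP before_i]]|].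
  have before j : j < i -> (nth x0 s j != x) && (nth x0 s j != y).
    by move=> lt_ji; have := before_i (Ordinal (ltn_trans lt_ji (ltn_ord i))); rewrite lt_ji.
  have index_x : index x s = i.
    by apply: index_first_nth; rewrite ?size_s // => j /before /andP[].
  rewrite index_x ltnNge; apply/negP => le_yi.
  have y_in : y \in s by rewrite -index_mem size_s (leq_ltn_trans le_yi).
  move: le_yi; rewrite leq_eqVlt => /orP[/eqP eq_yi|/before].
    by move: neq_xy; rewrite -nth_i -eq_yi nth_index ?eqxx.
  by rewrite nth_index // eqxx andbF.
move=> lt_xy; have lt_x : index x s < n by rewrite -size_s (leq_trans lt_xy) ?index_size.
exists (Ordinal lt_x); rewrite /= nth_index ?eqxx -?index_mem ?size_s //=.
apply/forallP => j; apply/implyP => lt_jx; rewrite !nth_before_index //.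
exact: ltn_trans lt_xy.
Qed.

End FirstOccurrence.

Section Blocks.
Variables (T : eqType) (x0 : T) (b t : nat).
Implicit Types (s : seq T).

Definition blocks s := [seq nth x0 s (j * b) | j <- iota 0 t.+1].

Lemma size_blocks s : size (blocks s) = t.+1.
Proof. by rewrite size_map size_iota. Qed.

Lemma nth_blocks s j : j <= t -> nth x0 (blocks s) j = nth x0 s (j * b).
Proof. by move=> le_jt; rewrite (nth_map 0) ?size_iota // nth_iota. Qed.

Section SwapBlocks.
Variables (a c : T).

Definition swap_sym x := if x == a then c else if x == c then a else x.

Lemma swap_symK : involutive swap_sym.
Proof.
move=> x; rewrite /swap_sym.
have [->|/negPf neq_xa] := eqVneq x a; first by case: eqVneq => [->|]; rewrite ?eqxx.
have [->|/negPf neq_xc] := eqVneq x c; first by rewrite eqxx.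
by rewrite neq_xa neq_xc.
Qed.

Lemma swap_sym_eq x y : (swap_sym x == y) = (x == swap_sym y).
Proof. by apply/eqP/eqP => [<-|->]; rewrite swap_symK. Qed.

Lemma swap_sym_a : swap_sym a = c.
Proof. by rewrite /swap_sym eqxx. Qed.

Lemma swap_sym_c : swap_sym c = a.
Proof. by rewrite -swap_sym_a swap_symK. Qed.

Definition swap_blocks m s :=
  [seq if (p %% b == 0) && (p <= m * b) then swap_sym (nth x0 s p) else nth x0 s p
  | p <- iota 0 (size s)].

Lemma size_swap_blocks m s : size (swap_blocks m s) = size s.
Proof. by rewrite size_map size_iota. Qed.

Lemma nth_swap_blocks m s p : p < size s -> nth x0 (swap_blocks m s) p =
  if (p %% b == 0) && (p <= m * b) then swap_sym (nth x0 s p) else nth x0 s p.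
Proof. by move=> lt_ps; rewrite (nth_map 0) ?size_iota // nth_iota. Qed.

Lemma swap_blocksK m : involutive (swap_blocks m).
Proof.
move=> s; apply: (@eq_from_nth _ x0) => [|p]; rewrite !size_swap_blocks // => lt_ps.
rewrite !nth_swap_blocks ?size_swap_blocks //.
by case: (_ && _); rewrite ?swap_symK.
Qed.

Lemma drop_swap_blocks m s : drop (m * b).+1 (swap_blocks m s) = drop (m * b).+1 s.
Proof.
apply: (@eq_from_nth _ x0) => [|i]; rewrite !size_drop size_swap_blocks // => lt_i.
rewrite !nth_drop nth_swap_blocks; last by rewrite -ltn_subRL.
by rewrite addSn ltnNge leq_addr andbF.
Qed.

Hypothesis b_gt0 : 0 < b.

Lemma nth_blocks_swap m s j : j <= t -> t * b < size s ->
  nth x0 (blocks (swap_blocks m s)) j =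
  if j <= m then swap_sym (nth x0 (blocks s) j) else nth x0 (blocks s) j.
Proof.
move=> le_jt lt_ts; have lt_js : j * b < size s.
  by apply: leq_ltn_trans lt_ts; rewrite leq_mul2r le_jt orbT.
by rewrite !nth_blocks // nth_swap_blocks // modnMl eqxx leq_pmul2r.
Qed.

Definition ordered_blocks s :=
  [&& t * b < size s, index a (blocks s) < index c (blocks s) & index c (blocks s) <= t].

Definition swap_first s := swap_blocks (index c (blocks s)) s.

Lemma index_swap_first s : ordered_blocks s ->
  index a (blocks (swap_first s)) = index c (blocks s) /\
  index c (blocks (swap_first s)) = index a (blocks s).
Proof.
case/and3P=> lt_ts lt_ac le_ct; set m := index c (blocks s).
have le_at : index a (blocks s) <= t by rewrite ltnW ?(leq_trans lt_ac).
have nth_index_blocks e : index e (blocks s) <= t -> nth x0 (blocks s) (index e (blocks s)) = e.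
  by move=> le_et; rewrite nth_index // -index_mem size_blocks.
split; apply: (@index_first_nth _ x0); rewrite ?size_blocks ?ltnS //.
- by rewrite nth_blocks_swap // leqnn nth_index_blocks // swap_sym_c.
- move=> j lt_jm; rewrite nth_blocks_swap ?(ltnW lt_jm) ?(leq_trans (ltnW lt_jm)) //.
  by rewrite swap_sym_eq swap_sym_a nth_before_index.
- by rewrite nth_blocks_swap // (ltnW lt_ac) nth_index_blocks // swap_sym_a.
- move=> j lt_ja; have le_jm : j <= m by rewrite ltnW ?(ltn_trans lt_ja).
  rewrite nth_blocks_swap ?le_jm ?(leq_trans le_jm) //.
  by rewrite swap_sym_eq swap_sym_c nth_before_index.
Qed.

Lemma swap_first_inj : {in ordered_blocks &, injective swap_first}.
Proof.
move=> s1 s2 ord1 ord2 eq12.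
have swap_firstK s : s = swap_blocks (index c (blocks s)) (swap_first s).
  by rewrite swap_blocksK.
have [idx1 _] := index_swap_first ord1; have [idx2 _] := index_swap_first ord2.
by rewrite (swap_firstK s1) (swap_firstK s2) -idx1 -idx2 eq12.
Qed.

End SwapBlocks.
End Blocks.

Section BurstReach.
Variables (q b : nat).
Implicit Types (s u v w T S P : seq 'I_q).
Local Notation R := (@burst_reach q b).

Lemma burst_insP s v : reflect
  (exists i y, [/\ i <= size s, size y = b & v = take i s ++ y ++ drop i s])
  (burst_ins b s v).
Proof.
apply: (iffP existsP) => [[i /existsP[y /eqP ->]]|[i [y [le_is size_y ->]]]].
  by exists i, (val y); rewrite size_tuple -ltnS ltn_ord.
exists (Ordinal (le_is : i < (size s).+1)); apply/existsP.
by exists (Tuple (introT eqP size_y)).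
Qed.

Lemma size_burst_ins s v : burst_ins b s v -> size v = size s + b.
Proof.
case/burst_insP=> i [y [le_is size_y ->]].
rewrite !size_cat size_y size_take size_drop; case: ltnP; lia.
Qed.

Lemma burst_reach0 s u : R 0 s u <-> u = s.
Proof. by rewrite /=; split=> [/eqP|->]. Qed.

Lemma burst_reachS t s u : R t.+1 s u <-> exists v, burst_ins b s v /\ R t v u.
Proof.
split=> [/existsP[z /andP[ins reach]]|[v [ins reach]]]; first by exists z.
have size_v : size v == size s + b by rewrite (size_burst_ins ins).
by apply/existsP; exists (Tuple size_v); apply/andP.
Qed.

Lemma burst_reach_add t1 t2 s u :
  R (t1 + t2) s u <-> exists v, R t1 s v /\ R t2 v u.
Proof.
elim: t1 s => [|t1 IH] s.
  by split=> [reach|[v [/burst_reach0 -> //]]]; exists s; split=> //; apply/burst_reach0.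
rewrite addSn; split.
  case/burst_reachS=> v [ins /IH[w [reach1 reach2]]].
  by exists w; split=> //; apply/burst_reachS; exists v.
case=> w [/burst_reachS[v [ins reach1]] reach2].
by apply/burst_reachS; exists v; split=> //; apply/IH; exists w.
Qed.

Lemma burst_reachSr t s u : R t.+1 s u <-> exists v, R t s v /\ burst_ins b v u.
Proof.
have reach1 v w : R 1 v w <-> burst_ins b v w.
  rewrite burst_reachS; split=> [[w' [ins /burst_reach0 ->]] //|ins].
  by exists w; split=> //; apply/burst_reach0.
rewrite -addn1 burst_reach_add.
by split=> -[v [reach /reach1 ins]]; exists v.
Qed.

Lemma burst_reach_cons t c T S : R t T S -> R t (c :: T) (c :: S).
Proof.
elim: t T => [|t IH] T; first by move=> /burst_reach0 ->; apply/burst_reach0.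
case/burst_reachS=> v [/burst_insP[i [y [le_iT size_y ->]]] reach].
apply/burst_reachS; exists (c :: (take i T ++ y ++ drop i T)); split; last exact: IH.
by apply/burst_insP; exists i.+1, y.
Qed.

Lemma burst_reach_prefix j P S : size P = j * b -> R j S (P ++ S).
Proof.
elim: j P => [|j IH] P size_P; first by case: P size_P => // _; apply/burst_reach0.
have size_take_P : size (take (j * b) P) = j * b.
  by rewrite size_take size_P mulSn; case: ltnP; lia.
rewrite -(cat_take_drop (j * b) P) -catA.
apply/burst_reachSr; exists (take (j * b) P ++ S); split; first exact: IH.
apply/burst_insP; exists (j * b), (drop (j * b) P).
rewrite size_cat size_take_P take_size_cat // drop_size_cat // size_drop size_P mulSn.
by split=> //; lia.
Qed.

(* The head symbol [c] survives: every burst lands either in front of it or behind it. *)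
Lemma burst_reach_consE t c T u : R t (c :: T) u ->
  exists k P S, [/\ k <= t, size P = k * b, R (t - k) T S & u = P ++ c :: S].
Proof.
elim: t u => [|t IH] u.
  by move=> /burst_reach0 ->; exists 0, [::], T; split=> //; apply/burst_reach0.
case/burst_reachSr=> v [/IH[k [P [S [le_kt size_P reach ->]]]]].
case/burst_insP=> i [y [le_i size_y ->]].
have [le_iP|lt_Pi] := leqP i (size P).
  exists k.+1, (take i P ++ y ++ drop i P), S; split=> //.
    by rewrite !size_cat size_take size_drop size_y size_P mulSn; case: ltnP; lia.
  rewrite take_cat drop_cat !ltn_neqAle le_iP andbT.
  by case: eqP => [->|_]; rewrite ?subnn ?take0 ?drop0 ?take_size ?drop_size ?cats0 -?catA.
have i_split : i - size P = (i - size P).-1.+1 by lia.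
exists k, P, (take (i - size P).-1 S ++ y ++ drop (i - size P).-1 S); split=> //; first exact: leqW.
  move: reach; rewrite subSn // => reach; apply/burst_reachSr; exists S; split=> //.
  apply/burst_insP; exists (i - size P).-1, y; split=> //.
  by move: le_i; rewrite size_cat /=; lia.
by rewrite take_cat drop_cat ltnNge (ltnW lt_Pi) /= i_split -catA.
Qed.

Section ReachBlocks.
Variables (t : nat) (d : 'I_q).
Local Notation blocks := (blocks d b t).

(* The symbols strictly between the block boundaries [j * b] and [k * b] form
   [k - j] extra bursts. *)
Lemma burst_reach_tail_le T z j k : j <= k -> k <= t -> k * b < size z ->
  R (t - k) T (drop (k * b).+1 z) -> R (t - j) T (drop (j * b).+1 z).
Proof.
move=> le_jk le_kt lt_kz reach.
have le_jbkb : j * b <= k * b by rewrite leq_mul2r le_jk orbT.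
rewrite -(cat_take_drop ((k - j) * b) (drop (j * b).+1 z)) drop_drop.
have -> : (k - j) * b + (j * b).+1 = (k * b).+1 by rewrite mulnBl; lia.
have -> : t - j = (t - k) + (k - j) by lia.
apply/burst_reach_add; exists (drop (k * b).+1 z); split=> //.
apply: burst_reach_prefix; rewrite size_take size_drop mulnBl; case: ltnP; lia.
Qed.

Lemma burst_reach_cons_first c T z : R t (c :: T) z ->
  let k := index c (blocks z) in k <= t /\ R (t - k) T (drop (k * b).+1 z).
Proof.
case/burst_reach_consE=> k [P [S [le_kt size_P reach eq_z]]] /=.
have nth_k : nth d (blocks z) k = c by rewrite nth_blocks // eq_z nth_cat size_P ltnn subnn.
have le_ck : index c (blocks z) <= k by rewrite -{1}nth_k index_nth ?size_blocks.
split; first exact: leq_trans le_ck le_kt.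
apply: (burst_reach_tail_le le_ck le_kt); first by rewrite eq_z size_cat size_P /=; lia.
by rewrite eq_z drop_cat size_P ltnNge leqnSn /= subSn // subnn /= drop0.
Qed.

Lemma burst_reach_cons_index c T z m : m <= t -> t * b < size z ->
  R (t - m) T (drop (m * b).+1 z) -> index c (blocks z) <= m -> R t (c :: T) z.
Proof.
move=> le_mt lt_tz reach le_cm; set j := index c (blocks z) in le_cm.
have le_jt : j <= t := leq_trans le_cm le_mt.
have lt_jz : j * b < size z by apply: leq_ltn_trans lt_tz; rewrite leq_mul2r le_jt orbT.
have lt_mz : m * b < size z by apply: leq_ltn_trans lt_tz; rewrite leq_mul2r le_mt orbT.
have nth_j : nth d z (j * b) = c.
  by rewrite -(nth_blocks d b z le_jt) nth_index // -index_mem size_blocks.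
rewrite -(cat_take_drop (j * b) z) (drop_nth d lt_jz) nth_j.
rewrite -(subnK le_jt); apply/burst_reach_add; exists (c :: drop (j * b).+1 z); split.
  exact/burst_reach_cons/(burst_reach_tail_le le_cm le_mt lt_mz reach).
by apply: burst_reach_prefix; rewrite size_take lt_jz.
Qed.

End ReachBlocks.
End BurstReach.

Section InsertionBalls.
Variables (n t q b : nat).
Hypothesis n_gt0 : 0 < n.
Local Notation word := ((n + t * b).-tuple 'I_q).
Implicit Types (U : {set word}) (z : word) (x y : n.-tuple 'I_q).

Lemma size_word_gt z : t * b < size z.
Proof. by rewrite size_tuple -[ltnLHS]add0n ltn_add2r. Qed.

Lemma mem_prec_set U a c d z : a != c ->
  (z \in prec_set U a c) = (z \in U) && (index a (blocks d b t z) < index c (blocks d b t z)).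
Proof.
move=> neq_ac; rewrite inE; congr andb.
have blocks_val : blocks q b t (map val z) = map val (blocks d b t z).
  rewrite /blocks -map_comp; apply/eq_in_map => j; rewrite mem_iota /= => lt_j.
  rewrite (nth_map d) //; apply: leq_ltn_trans (size_word_gt z).
  by rewrite leq_mul2r -ltnS lt_j orbT.
rewrite -(index_map val_inj _ a) -(index_map val_inj _ c) -blocks_val.
rewrite -(index_lt_exists q (size_blocks q b t (map val z)) neq_ac).
apply: eq_existsb => i; rewrite (@nth_blocks _ q b t _ i (ltn_ord i)); congr andb.
by apply: eq_forallb => j; rewrite (@nth_blocks _ q b t _ j (ltn_ord j)).
Qed.

Lemma card_Ins_inter_le x y : y != x -> #|Ins t b x :&: Ins t b y| <= Nplus q b n t.
Proof.
move=> neq_yx; apply: leq_trans (leq_bigmax x).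
exact: (@leq_bigmax_cond _ (fun y => y != x) (fun y => #|Ins t b x :&: Ins t b y|) y neq_yx).
Qed.

Section HeadSwap.
Variables (x : n.-tuple 'I_q) (x1 al : 'I_q) (T : seq 'I_q).
Hypothesis eq_x : x = x1 :: T :> seq 'I_q.
Hypothesis neq_al : al != x1.
Local Notation blk := (blocks x1 b t).

Lemma Ins_cons_first U z : U \subset Ins t b x -> z \in U ->
  let m := index x1 (blk z) in m <= t /\ burst_reach b (t - m) T (drop (m * b).+1 z).
Proof. by move=> /subsetP sub_U /sub_U; rewrite inE eq_x => /(burst_reach_cons_first x1). Qed.

Lemma prec_set_cover U : U \subset Ins t b x ->
  U \subset prec_set U al x1 :|: prec_set U x1 al.
Proof.
move=> sub_U; apply/subsetP => z zU; have [le_x1 _] := Ins_cons_first sub_U zU.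
rewrite inE (mem_prec_set _ x1 _ neq_al) (mem_prec_set _ x1) 1?eq_sym // zU !andTb.
have [//|//|eq_idx] := ltngtP (index al (blk z)) (index x1 (blk z)); move: neq_al.
have x1_in : x1 \in blk z by rewrite -index_mem size_blocks.
have al_in : al \in blk z by rewrite -index_mem size_blocks eq_idx.
by rewrite -(nth_index x1 al_in) eq_idx nth_index ?eqxx.
Qed.

Section OtherHead.
Variable x' : n.-tuple 'I_q.
Hypothesis eq_x' : x' = al :: T :> seq 'I_q.

Lemma mem_Ins_inter (w : word) m : m <= t ->
  burst_reach b (t - m) T (drop (m * b).+1 w) ->
  index al (blk w) <= m -> index x1 (blk w) <= m -> w \in Ins t b x :&: Ins t b x'.
Proof.
move=> le_mt reach le_al le_x1.
rewrite !inE eq_x eq_x'.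
by apply/andP; split; apply: (burst_reach_cons_index (d := x1) le_mt (size_word_gt w) reach).
Qed.

Hypothesis b_gt0 : 0 < b.

Lemma two_card_prec_set_le U : U \subset Ins t b x ->
  2 * #|prec_set U al x1| <= #|Ins t b x :&: Ins t b x'|.
Proof.
move=> sub_U; set A := prec_set U al x1.
have memA z : z \in A -> z \in U /\ ordered_blocks x1 b t al x1 z.
  rewrite (mem_prec_set _ x1 _ neq_al) => /andP[zU lt_idx]; split=> //.
  by apply/and3P; split; rewrite ?size_word_gt ?(Ins_cons_first sub_U zU).1.
have size_f z : size (swap_first x1 b t al x1 z) == n + t * b.
  by rewrite size_swap_blocks size_tuple.
pose f z : word := Tuple (size_f z).
have val_f z : tval (f z) = swap_first x1 b t al x1 z by [].
have sub_A : A \subset Ins t b x :&: Ins t b x'.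
  apply/subsetP => z /memA[zU /and3P[_ lt_idx _]].
  have [le_x1 reach] := Ins_cons_first sub_U zU.
  exact: mem_Ins_inter le_x1 reach (ltnW lt_idx) _.
have sub_fA : f @: A \subset Ins t b x :&: Ins t b x'.
  apply/subsetP => _ /imsetP[z /memA[zU ord_z] ->].
  have [le_x1 reach] := Ins_cons_first sub_U zU.
  have [idx_al idx_x1] := index_swap_first b_gt0 ord_z.
  case/and3P: ord_z => _ lt_idx _.
  apply: mem_Ins_inter le_x1 _ _ _; rewrite val_f ?idx_al ?idx_x1 ?(ltnW lt_idx) //.
  by rewrite drop_swap_blocks.
have disj : [disjoint A & f @: A].
  rewrite disjoint_sym disjoint_subset; apply/subsetP => _ /imsetP[z /memA[_ ord_z] ->].
  rewrite inE; apply/negP => /memA[_ /and3P[_]].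
  have [-> ->] := index_swap_first b_gt0 ord_z.
  by case/and3P: ord_z => _ /ltnW; rewrite leqNgt => /negPf ->.
have card_fA : #|f @: A| = #|A|.
  apply: card_in_imset => z1 z2 /memA[_ ord1] /memA[_ ord2] /(congr1 val) eq_f.
  exact/val_inj/(swap_first_inj b_gt0 ord1 ord2).
rewrite mul2n -addnn -{2}card_fA; have [_] := leq_card_setU A (f @: A).
rewrite disj => /eqP <-; apply: subset_leq_card; by rewrite subUset sub_A sub_fA.
Qed.

End OtherHead.

Lemma prec_set_card_le_Nplus U : 0 < b -> U \subset Ins t b x ->
  2 * #|prec_set U al x1| <= Nplus q b n t.
Proof.
move=> b_gt0 sub_U.
have size_x' : size (al :: T) == n by rewrite -(size_tuple x) eq_x.
pose x' : n.-tuple 'I_q := Tuple size_x'.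
have neq_x' : x' != x by apply: contra neq_al => /eqP/(congr1 val); rewrite /= eq_x => -[->].
exact: leq_trans (two_card_prec_set_le (x' := x') erefl b_gt0 sub_U) (card_Ins_inter_le neq_x').
Qed.

End HeadSwap.
End InsertionBalls.

Theorem lemma3p6 (n t q b : nat) (hn : 0 < n) (ht : 1 <= t) (hq : 2 <= q) (hb : 2 <= b)
    (x : n.-tuple 'I_q) (U : {set (n + t * b).-tuple 'I_q})
    (hU : U \subset Ins t b x) :
  let x1 := tnth x (Ordinal hn) in
  (forall alpha : 'I_q, alpha != x1 ->
     2 * #|prec_set U alpha x1| <= Nplus q b n t)
  /\
  (Nplus q b n t + 1 <= #|U| ->
     forall alpha : 'I_q, alpha != x1 ->
       #|prec_set U alpha x1| < #|prec_set U x1 alpha|).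
Proof.
move=> x1; have b_gt0 : 0 < b by apply: ltnW.
have eq_x : x = x1 :: behead x :> seq 'I_q.
  rewrite /x1 (tnth_nth x1); case: (tval x) (size_tuple x) => // n0.
  by exfalso; have := hn; rewrite -n0.
have card_prec al : al != x1 -> 2 * #|prec_set U al x1| <= Nplus q b n t.
  by move=> neq_al; exact: (prec_set_card_le_Nplus hn eq_x neq_al b_gt0 hU).
split=> // ltNU al neq_al.
have [le_cover _] := leq_card_setU (prec_set U al x1) (prec_set U x1 al).
have := leq_trans (subset_leq_card (prec_set_cover hn eq_x neq_al hU)) le_cover.
by have := card_prec al neq_al; lia.
Qed.
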